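(* Given $f:\{0,1\}^n\to\mathbb{R}$, there exists $g:\{0,1\}^{n+1}\to\mathbb{R}$ such that: (1) if $f$ is monotonically non-increasing, then $g$ is submodular; (2) if $f$ is $\epsilon$-far from being monotonically non-increasing, then $g$ is $\epsilon/2$-far from being submodular; (3) each value $g(z)$ can be computed by looking at (at most) $2$ values of $f$.
   Context: $f$ is monotonically non-increasing if $f(x)\ge f(y)$ whenever $x\le y$ coordinatewise. $g$ is submodular if $g(x+\mathbf{e}_i)-g(x)\ge g(y+\mathbf{e}_i)-g(y)$ for all $i$ and $x\le y$ with $x_i=y_i=0$, where $\mathbf{e}_i$ is the $i$-th standard basis vector. A function on a hypercube $\{0,1\}^m$ is $\epsilon$-far from a property if every function with the property differs from it on more than an $\epsilon$ fraction of the $2^m$ points. *)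

From mathcomp Require Import all_boot all_order all_algebra.
From mathcomp Require Import reals.
Set Implicit Arguments. Unset Strict Implicit. Unset Printing Implicit Defensive.
Import Order.TTheory GRing.Theory Num.Theory.
Local Open Scope ring_scope.

(* The hypercube {0,1}^m : bit vectors indexed by 'I_m (true = 1). *)
Definition cube (m : nat) := {ffun 'I_m -> bool}.

Definition cle (m : nat) (x y : cube m) : Prop := forall i, (x i <= y i)%N.

(* x + e_i, used only when x_i = 0: set coordinate i to 1 *)
Definition adde (m : nat) (x : cube m) (i : 'I_m) : cube m :=
  [ffun j => if j == i then true else x j].

Definition mono_nonincr (R : realType) (m : nat) (f : cube m -> R) : Prop :=
  forall x y : cube m, cle x y -> f y <= f x.

Definition submodular (R : realType) (m : nat) (g : cube m -> R) : Prop :=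
  forall (i : 'I_m) (x y : cube m), cle x y -> x i = false -> y i = false ->
    g (adde y i) - g y <= g (adde x i) - g x.

Definition hdist (R : realType) (m : nat) (f h : cube m -> R) : nat :=
  #|[set x : cube m | f x != h x]|.

Definition far (R : realType) (m : nat) (P : (cube m -> R) -> Prop)
  (eps : R) (f : cube m -> R) : Prop :=
  forall h : cube m -> R, P h -> eps * (2 ^ m)%:R < (hdist f h)%:R.

From mathcomp Require Import all_boot all_order all_algebra.
From mathcomp Require Import reals.
From mathcomp Require Import ring lra.
Set Implicit Arguments. Unset Strict Implicit. Unset Printing Implicit Defensive.
Import Order.TTheory GRing.Theory Num.Theory.
Local Open Scope ring_scope.

(* Write z in {0,1}^(n+1) as (x, b) with x in {0,1}^n and b the last bit, and
   set g (x, b) := b * s (f x) - 2 |x|^2, where s is an increasing bijection of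
   R onto (-1, 1) and |x| is the Hamming weight.  The concave term -2 |x|^2
   makes every marginal in a direction of x drop by at least 4 as soon as the
   weight grows, which dominates the bounded term b * s (f x); so submodularity
   of g only constrains pairs with the same x, where it says exactly that f is
   non-increasing.  Conversely, the marginal of g in direction b is s (f x); if
   a submodular function agrees with g on both (x, 0) and (x, 1) for every x in
   some set P, then f is non-increasing on P and can be extended from P to a
   non-increasing function.  Each x outside P costs at least one disagreement,
   out of twice as many points. *)

Section Squash.
Variable R : realType.

Definition squash (u : R) : R := u / (1 + `|u|).

Lemma squash_bound (u : R) : -1 < squash u < 1.
Proof.
have hu : 0 < 1 + `|u| by rewrite ltr_pwDl.
rewrite /squash ltr_pdivrMr // ltr_pdivlMr //.
by case: (lerP 0 u) => u0; [rewrite ger0_norm | rewrite ltr0_norm]; lra.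
Qed.

Lemma squash_lt : {homo squash : u v / u < v}.
Proof.
move=> u v uv; rewrite /squash.
have hu : 0 < 1 + `|u| by rewrite ltr_pwDl.
have hv : 0 < 1 + `|v| by rewrite ltr_pwDl.
rewrite ltr_pdivrMr // mulrAC ltr_pdivlMr //.
case: (lerP 0 u) => u0; case: (lerP 0 v) => v0.
- rewrite (ger0_norm u0) (ger0_norm v0); nra.
- lra.
- rewrite (ltr0_norm u0) (ger0_norm v0); nra.
- rewrite (ltr0_norm u0) (ltr0_norm v0); nra.
Qed.

Lemma squash_le : {mono squash : u v / u <= v}.
Proof. exact: le_mono squash_lt. Qed.

End Squash.

Section Cube.
Variable m : nat.
Implicit Types x y : cube m.

Definition cleb x y : bool := [forall i, x i <= y i]%N.

Lemma cleP x y : reflect (cle x y) (cleb x y).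
Proof. exact: (iffP forallP). Qed.

Lemma cle_trans x y z : cle x y -> cle y z -> cle x z.
Proof. by move=> xy yz i; exact: leq_trans (xy i) (yz i). Qed.

Lemma cle_adde x i : cle x (adde x i).
Proof. by move=> j; rewrite ffunE; case: (j == i); rewrite ?leq_b1. Qed.

Definition weight x : nat := #|[set i | x i]|.

Lemma cle_subset x y : cle x y -> [set i | x i] \subset [set i | y i].
Proof.
move=> xy; apply/subsetP => i; rewrite !inE.
by move: (xy i); case: (x i); case: (y i).
Qed.

Lemma weight_le x y : cle x y -> (weight x <= weight y)%N.
Proof. by move=> xy; apply/subset_leq_card/cle_subset. Qed.

Lemma cle_weight_eq x y : cle x y -> weight x = weight y -> x = y.
Proof.
move=> xy exy; have [_] := subset_leqif_cards (cle_subset xy).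
rewrite -/(weight x) -/(weight y) exy eqxx => /esym/eqP/setP eqxy.
by apply/ffunP => i; move: (eqxy i); rewrite !inE.
Qed.

Lemma weight_adde x i : x i = false -> weight (adde x i) = (weight x).+1.
Proof.
move=> xi; rewrite /weight; have -> : [set j | adde x i j] = i |: [set j | x j].
  by apply/setP => j; rewrite !inE ffunE; case: (j == i).
by rewrite cardsU1 inE xi.
Qed.

Lemma exists_mono_nonincr_extension (R : realType) (P : pred (cube m))
    (f : cube m -> R) :
  {in P &, forall x y, cle x y -> f y <= f x} ->
  exists h : cube m -> R, mono_nonincr h /\ {in P, h =1 f}.
Proof.
move=> monoP.
pose fmax := \big[Order.max/0]_y f y.
pose h x := \big[Order.min/fmax]_(y | P y && cleb y x) f y.
exists h; split.
  move=> x x' xx'; apply: le_bigmin; first exact: bigmin_le_id.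
  move=> y /andP[Py /cleP yx]; apply: bigmin_le_cond.
  by rewrite Py; apply/cleP; exact: cle_trans yx xx'.
move=> x Px; apply/le_anti/andP; split.
  by apply: bigmin_le_cond; apply/andP; split; [exact: Px | apply/cleP].
apply: le_bigmin; first exact: le_bigmax.
by move=> y /andP[Py /cleP yx]; exact: monoP.
Qed.

End Cube.

Section Splitting.
Variable n : nat.
Implicit Types (x y : cube n) (z : cube n.+1) (j : 'I_n).

Definition low (z : cube n.+1) : cube n := [ffun j => z (lift ord_max j)].
Definition top (z : cube n.+1) : bool := z ord_max.
Definition extend (x : cube n) (b : bool) : cube n.+1 :=
  [ffun i => if unlift ord_max i is Some j then x j else b].

Lemma low_extend x b : low (extend x b) = x.
Proof. by apply/ffunP => j; rewrite !ffunE liftK. Qed.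

Lemma top_extend x b : top (extend x b) = b.
Proof. by rewrite /top ffunE unlift_none. Qed.

Lemma adde_extend_top x : adde (extend x false) ord_max = extend x true.
Proof.
apply/ffunP => i; rewrite !ffunE; case: unliftP => [j ->|->]; last by rewrite eqxx.
by rewrite eq_sym (negbTE (neq_lift _ _)).
Qed.

Lemma cle_extend x y b : cle x y -> cle (extend x b) (extend y b).
Proof. by move=> xy i; rewrite !ffunE; case: (unlift ord_max i). Qed.

Lemma cle_low z z' : cle z z' -> cle (low z) (low z').
Proof. by move=> zz' j; rewrite !ffunE. Qed.

Lemma low_adde_top z : low (adde z ord_max) = low z.
Proof. by apply/ffunP => j; rewrite !ffunE eq_sym (negbTE (neq_lift _ _)). Qed.

Lemma top_adde_top z : top (adde z ord_max) = true.
Proof. by rewrite /top ffunE eqxx. Qed.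

Lemma low_adde_lift z j : low (adde z (lift ord_max j)) = adde (low z) j.
Proof.
apply/ffunP => k; rewrite !ffunE (inj_eq (@lift_inj _ ord_max)).
by case: (k == j); rewrite ?ffunE.
Qed.

Lemma top_adde_lift z j : top (adde z (lift ord_max j)) = top z.
Proof. by rewrite /top ffunE (negbTE (neq_lift _ _)). Qed.

End Splitting.

Section Reduction.
Variables (R : realType) (n : nat) (f : cube n -> R).
Implicit Types (z : cube n.+1) (j : 'I_n).

Definition reduction (z : cube n.+1) : R :=
  (if top z then squash (f (low z)) else 0) - 2 * (weight (low z))%:R ^+ 2.

Lemma reduction_marginal_top z : top z = false ->
  reduction (adde z ord_max) - reduction z = squash (f (low z)).
Proof. by move=> ztop; rewrite /reduction low_adde_top top_adde_top ztop; lra. Qed.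

Lemma reduction_marginal_lift z j : z (lift ord_max j) = false ->
  reduction (adde z (lift ord_max j)) - reduction z =
    (if top z then squash (f (adde (low z) j)) - squash (f (low z)) else 0)
    - 4 * (weight (low z))%:R - 2.
Proof.
move=> zj; rewrite /reduction top_adde_lift low_adde_lift weight_adde ?ffunE //.
by rewrite -addn1 natrD; case: (top z); ring.
Qed.

Lemma bit_squash_diff_bound (b : bool) (u v : R) :
  -2 < (if b then squash u - squash v else 0) < 2.
Proof.
case: b; last by apply/andP; split; lra.
move: (squash_bound u) (squash_bound v) => /andP[? ?] /andP[? ?].
by apply/andP; split; lra.
Qed.

Lemma reduction_submodular : mono_nonincr f -> submodular reduction.
Proof.
move=> monof i x y xy; case: (unliftP ord_max i) => [j ->|->] xj yj.
  rewrite !reduction_marginal_lift //.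
  have [wxy|wxy] := eqVneq (weight (low x)) (weight (low y)).
    rewrite wxy -(cle_weight_eq (cle_low xy) wxy).
    have := xy ord_max; rewrite -/(top x) -/(top y).
    case: (top x); case: (top y) => // _.
    have := monof _ _ (cle_adde (low x) j); rewrite -squash_le; lra.
  have wlt : (weight (low x))%:R + 1 <= (weight (low y))%:R :> R.
    by rewrite natr1 ler_nat ltn_neqAle wxy; exact/weight_le/cle_low.
  move: (bit_squash_diff_bound (top x) (f (adde (low x) j)) (f (low x))).
  move: (bit_squash_diff_bound (top y) (f (adde (low y) j)) (f (low y))).
  move=> /andP[? ?] /andP[? ?]; lra.
rewrite !reduction_marginal_top // squash_le.
exact/monof/cle_low.
Qed.

Definition fiber_agree (s : cube n.+1 -> R) (x : cube n) : bool :=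
  (reduction (extend x false) == s (extend x false)) &&
  (reduction (extend x true) == s (extend x true)).

Lemma fiber_agree_mono_nonincr (s : cube n.+1 -> R) : submodular s ->
  {in fiber_agree s &, forall x y, cle x y -> f y <= f x}.
Proof.
move=> subs x y /andP[/eqP sx0 /eqP sx1] /andP[/eqP sy0 /eqP sy1] xy.
have := subs ord_max _ _ (cle_extend false xy) (top_extend _ _) (top_extend _ _).
rewrite !adde_extend_top -sx0 -sx1 -sy0 -sy1 -!adde_extend_top.
by rewrite !reduction_marginal_top ?top_extend // !low_extend squash_le.
Qed.

Lemma hdist_le_fiber_disagree (s : cube n.+1 -> R) (h : cube n -> R) :
  {in fiber_agree s, h =1 f} -> (hdist f h <= hdist reduction s)%N.
Proof.
move=> hf; rewrite /hdist; set D := [set z | reduction z != s z].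
apply: (leq_trans _ (leq_imset_card (@low n) D)); apply: subset_leq_card.
apply/subsetP => x; rewrite inE => fhx.
have : ~~ fiber_agree s x by apply: contra fhx => /hf ->.
rewrite negb_and => /orP[] dis.
  by rewrite -(low_extend x false); apply: imset_f; rewrite inE.
by rewrite -(low_extend x true); apply: imset_f; rewrite inE.
Qed.

Lemma reduction_far (eps : R) :
  far (@mono_nonincr R n) eps f -> far (@submodular R n.+1) (eps / 2) reduction.
Proof.
move=> farf s subs.
have [h [monoh hf]] :=
  exists_mono_nonincr_extension (fiber_agree_mono_nonincr subs).
have -> : eps / 2 * (2 ^ n.+1)%:R = eps * (2 ^ n)%:R by rewrite expnS natrM; field.
apply: lt_le_trans (farf h monoh) _.
by rewrite ler_nat hdist_le_fiber_disagree.
Qed.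

End Reduction.

Theorem lemma11 (R : realType) (n : nat) :
  exists G : (cube n -> R) -> (cube n.+1 -> R),
    (forall f : cube n -> R,
       (mono_nonincr f -> submodular (G f)) /\
       (forall eps : R, far (@mono_nonincr R n) eps f ->
                        far (@submodular R n.+1) (eps / 2) (G f))) /\
    (forall z : cube n.+1, exists (a b : cube n) (h : R -> R -> R),
       forall f : cube n -> R, G f z = h (f a) (f b)).
Proof.
exists (@reduction R n); split.
  by move=> f; split; [exact: reduction_submodular | exact: reduction_far].
move=> z; exists (low z), (low z).
by exists (fun u _ =>
  (if top z then squash u else 0) - 2 * (weight (low z))%:R ^+ 2).
Qed.
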